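(* Let $I$ be a finite index set and $\{(x_i,f_i,g_i)\}_{i\in I}\subset\mathbb{R}^n\times\mathbb{R}\times\mathbb{R}^n$. The following are equivalent: (i) there exists a convex function $f:\mathbb{R}^n\to\mathbb{R}$ which is differentiable and strictly convex and satisfies $f_i=f(x_i)$, $g_i=\nabla f(x_i)$ for all $i\in I$; (ii) for every $i,j\in I$: $f_i-f_j-\langle g_j,x_i-x_j\rangle\ge0$; $f_i-f_j-\langle g_j,x_i-x_j\rangle>0$ if $x_i\ne x_j$; and $f_i-f_j-\langle g_j,x_i-x_j\rangle>0$ if $g_i\ne g_j$. *)

From HB Require Import structures.
From mathcomp Require Import all_boot all_order all_algebra.
From mathcomp Require Import all_classical all_reals all_analysis.
Set Implicit Arguments. Unset Strict Implicit. Unset Printing Implicit Defensive.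
Import Order.TTheory GRing.Theory Num.Theory.
Import numFieldNormedType.Exports.
Local Open Scope ring_scope.

Definition dotv (R : realType) (n : nat) (u v : 'rV[R]_n) : R :=
  \sum_(k < n) u ord0 k * v ord0 k.

Definition convex_fun (R : realType) (n : nat) (f : 'rV[R]_n -> R) : Prop :=
  forall (x y : 'rV[R]_n) (t : R), 0 <= t -> t <= 1 ->
    f (t *: x + (1 - t) *: y) <= t * f x + (1 - t) * f y.

Definition strictly_convex_fun (R : realType) (n : nat) (f : 'rV[R]_n -> R) : Prop :=
  forall (x y : 'rV[R]_n) (t : R), x != y -> 0 < t -> t < 1 ->
    f (t *: x + (1 - t) *: y) < t * f x + (1 - t) * f y.

Definition is_gradient (R : realType) (n : nat) (f : 'rV[R]_n -> R)
  (x g : 'rV[R]_n) : Prop :=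
  differentiable f x /\ forall v : 'rV[R]_n, 'd f x v = dotv g v.

From HB Require Import structures.
From mathcomp Require Import all_boot all_order all_algebra.
From mathcomp Require Import all_classical all_reals all_analysis.
From mathcomp Require Import ring lra.
Import Order.TTheory GRing.Theory Num.Theory.
Import numFieldNormedType.Exports.
Local Open Scope classical_set_scope.
Local Open Scope ring_scope.

Set Implicit Arguments.
Unset Strict Implicit.
Unset Printing Implicit Defensive.

(* Necessity: a differentiable convex function lies above its tangent planes,
   strictly so away from the point of tangency when it is strictly convex, and
   its gradient at a point is unique.
   Sufficiency: for small e > 0 the shifted data c_i = f_i - e/2 |x_i|^2,
   G_i = g_i - e x_i satisfy the tangent-plane inequalities with a uniform
   margin M > 0 at distinct points, and coincident points carry identical
   data. The maximum of the affine functions z |-> c_j + <G_j, z - x_j> is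
   convex and, at each x_i, equal to its i-th piece, which dominates the other
   pieces by M there. Smoothing each binary max with a Huber function of width
   h << M makes it differentiable without changing its value or gradient at the
   x_i. Adding back e/2 |z|^2 restores the data and gives strict convexity. *)

Section DotProduct.
Variables (R : realType) (n : nat).
Implicit Types (u v w : 'rV[R]_n) (a t : R).

Lemma dotvC u v : dotv u v = dotv v u.
Proof. by apply: eq_bigr => k _; rewrite mulrC. Qed.

Lemma dotv_is_linear u : linear (dotv u).
Proof.
move=> a v w; rewrite /dotv scaler_sumr -big_split.
by apply: eq_bigr => k _; rewrite !mxE mulrDr mulrCA.
Qed.

HB.instance Definition _ u :=
  GRing.isLinear.Build R 'rV[R]_n R *:%R (dotv u) (dotv_is_linear u).

Lemma dotvDr u v w : dotv u (v + w) = dotv u v + dotv u w.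
Proof. exact: linearD. Qed.

Lemma dotvZr a u v : dotv u (a *: v) = a * dotv u v.
Proof. exact: linearZ. Qed.

Lemma dotvBr u v w : dotv u (v - w) = dotv u v - dotv u w.
Proof. exact: linearB. Qed.

Lemma dotvDl u v w : dotv (u + v) w = dotv u w + dotv v w.
Proof. by rewrite dotvC dotvDr !(dotvC w). Qed.

Lemma dotvZl a u v : dotv (a *: u) v = a * dotv u v.
Proof. by rewrite dotvC dotvZr dotvC. Qed.

Lemma dotvBl u v w : dotv (u - v) w = dotv u w - dotv v w.
Proof. by rewrite dotvC dotvBr !(dotvC w). Qed.

Lemma dotvv_ge0 u : 0 <= dotv u u.
Proof. by rewrite sumr_ge0 // => k _; rewrite -expr2 sqr_ge0. Qed.

Lemma dotvv_gt0 u : u != 0 -> 0 < dotv u u.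
Proof.
move=> u_neq0; rewrite lt_def dotvv_ge0 andbT; apply: contra u_neq0.
rewrite psumr_eq0 => [/allP u0|k _]; last by rewrite -expr2 sqr_ge0.
apply/eqP/rowP => k; rewrite mxE; apply/eqP.
by rewrite -sqrf_eq0 expr2; exact: u0 (mem_index_enum k).
Qed.

Lemma dotvv_le_norm u : dotv u u <= n%:R * `|u| ^+ 2.
Proof.
have -> : n%:R * `|u| ^+ 2 = \sum_(k < n) `|u| ^+ 2.
  by rewrite sumr_const card_ord mulr_natl.
apply: ler_sum => k _.
rewrite -expr2 -real_normK ?num_real // lerXn2r ?nnegrE //.
by rewrite [`|u|]mx_normrE; exact: (le_bigmax _ _ (ord0, k)).
Qed.

Lemma dotv_delta_mx u k : dotv u (delta_mx ord0 k) = u ord0 k.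
Proof.
rewrite /dotv (bigD1 k) //= big1 ?addr0 => [|l lk].
  by rewrite mxE !eqxx mulr1.
by rewrite mxE eqxx (negbTE lk) mulr0.
Qed.

Lemma dotv_continuous u : continuous (dotv u).
Proof.
rewrite /dotv; apply: continuous_big => [|k _]; first exact: add_continuous.
move=> v; apply: (@continuousM _ _ (fun=> u ord0 k) (fun w => w ord0 k)).
  exact: cst_continuous.
exact: coord_continuous.
Qed.

Lemma dotvv_convex_comb t u v :
  dotv (t *: u + (1 - t) *: v) (t *: u + (1 - t) *: v) =
  t * dotv u u + (1 - t) * dotv v v - t * (1 - t) * dotv (u - v) (u - v).
Proof.
by rewrite !(dotvBl, dotvBr, dotvDl, dotvDr, dotvZl, dotvZr) (dotvC v u); ring.
Qed.

End DotProduct.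

Section QuadraticRemainder.
Variables (R : realType) (V : normedModType R).

Lemma is_diff_quadratic_remainder (f : V -> R) (L : {linear V -> R}) x C :
  continuous L -> (forall y, `|f (y + x) - f x - L y| <= C * `|y| ^+ 2) ->
  is_diff x f L.
Proof.
move=> L_cont remainder.
have L_tangent : f \o shift x = cst (f x) + L +o_0 id.
  apply/eqaddoP => eps eps_gt0.
  have C1_gt0 : 0 < `|C| + 1 by rewrite ltr_pwDr.
  apply/nbhs_norm0P; exists (eps / (`|C| + 1)) => [|y /=].
    by rewrite /= divr_gt0.
  rewrite ltr_pdivlMr // => y_small.
  have := remainder y; rewrite opprD addrA => /le_trans; apply.
  rewrite expr2 mulrA ler_wpM2r //.
  have := ler_norm C; have := normr_ge0 y; have := normr_ge0 C; nra.
have dfE := diff_unique L_cont L_tangent.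
by apply: DiffDef; [apply/diff_locallyP; rewrite dfE | exact: dfE].
Qed.

End QuadraticRemainder.

Section ConvexGradients.
Variables (R : realType) (n : nat).
Implicit Types (f : 'rV[R]_n -> R) (x y z u : 'rV[R]_n).

Global Instance is_diff_dotvv z : is_diff z (fun w => dotv w w) (dotv (2 *: z)).
Proof.
apply: (is_diff_quadratic_remainder (C := n%:R)); first exact: dotv_continuous.
move=> y; have -> : dotv (y + z) (y + z) - dotv z z - dotv (2 *: z) y = dotv y y.
  by rewrite dotvDl !dotvDr dotvZl (dotvC z y); ring.
by rewrite ger0_norm ?dotvv_ge0 ?dotvv_le_norm.
Qed.

Lemma is_diff_gradient f x u : is_diff x f (dotv u) -> is_gradient f x u.
Proof. by move=> df; split; [exact: ex_diff | move=> v; rewrite diff_val]. Qed.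

Lemma is_gradient_unique f x u v : is_gradient f x u -> is_gradient f x v -> u = v.
Proof.
move=> [_ du] [_ dv]; apply/rowP => k.
by rewrite -(dotv_delta_mx u) -(dotv_delta_mx v) -du -dv.
Qed.

Lemma convex_gradient_ineq f x y : convex_fun f -> differentiable f x ->
  f x + 'd f x (y - x) <= f y.
Proof.
move=> f_convex df; rewrite addrC -lerBrDr.
pose q t := t^-1 *: (f (t *: (y - x) + x) - f x).
have : q t @[t --> 0^'+] --> 'd f x (y - x).
  apply: cvg_dnbhs_at_right; rewrite -deriveE //.
  exact: diff_derivable _ _ (y - x) df.
move/cvgr_to_le; apply; near=> t.
have t_gt0 : 0 < t by near: t; exact: nbhs_right_gt.
have t_le1 : t <= 1 by near: t; exact: nbhs_right_le.
rewrite /q ler_pdivrMl //.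
have -> : t *: (y - x) + x = t *: y + (1 - t) *: x.
  by apply/rowP => k; rewrite !mxE; ring.
have := f_convex y x t (ltW t_gt0) t_le1; lra.
Unshelve. all: by end_near.
Qed.

Lemma strictly_convex_gradient_ineq f x y :
  convex_fun f -> strictly_convex_fun f -> differentiable f x -> y != x ->
  f x + 'd f x (y - x) < f y.
Proof.
move=> f_convex f_strict df yx.
pose m := 2^-1 *: y + (1 - 2^-1) *: x.
have f_mid : f m < 2^-1 * f y + (1 - 2^-1) * f x.
  by apply: f_strict; rewrite ?invr_gt0 ?invf_lt1 ?ltr1n.
have : f x + 'd f x (m - x) <= f m by exact: convex_gradient_ineq.
have -> : m - x = 2^-1 *: (y - x) by apply/rowP => k; rewrite !mxE; ring.
have -> : 'd f x (2^-1 *: (y - x)) = 2^-1 * 'd f x (y - x) by rewrite linearZ.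
lra.
Qed.

Lemma convex_add_dotvv f (e : R) : 0 <= e -> convex_fun f ->
  convex_fun (fun z => f z + e * dotv z z).
Proof.
move=> e_ge0 f_convex x y t t_ge0 t_le1; rewrite dotvv_convex_comb.
have := f_convex x y t t_ge0 t_le1.
have : 0 <= e * (t * (1 - t) * dotv (x - y) (x - y)).
  by rewrite !mulr_ge0 ?dotvv_ge0 ?subr_ge0.
move: (f _) (f x) (f y) (dotv x x) (dotv y y) (dotv (x - y) _) => ? ? ? ? ? ?; nra.
Qed.

Lemma strictly_convex_add_dotvv f (e : R) : 0 < e -> convex_fun f ->
  strictly_convex_fun (fun z => f z + e * dotv z z).
Proof.
move=> e_gt0 f_convex x y t xy t_gt0 t_lt1; rewrite dotvv_convex_comb.
have := f_convex x y t (ltW t_gt0) (ltW t_lt1).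
have : 0 < e * (t * (1 - t) * dotv (x - y) (x - y)).
  by rewrite !mulr_gt0 ?dotvv_gt0 ?subr_gt0 ?subr_eq0.
move: (f _) (f x) (f y) (dotv x x) (dotv y y) (dotv (x - y) _) => ? ? ? ? ? ?; nra.
Qed.

End ConvexGradients.

Section UnitHuber.
Variable R : realType.
Implicit Types u v : R.

Definition huber1 u : R :=
  if u <= -1 then - u / 2 else if 1 <= u then u / 2 else (u ^+ 2 + 1) / 4.

Definition huber1_slope u : R :=
  if u <= -1 then - 1 / 2 else if 1 <= u then 1 / 2 else u / 2.

Lemma huber1_tangent u v :
  0 <= huber1 v - huber1 u - huber1_slope u * (v - u) <= (v - u) ^+ 2 / 4.
Proof.
rewrite /huber1 /huber1_slope; have := sqr_ge0 (v - u).
by case: (lerP u (-1)); case: (lerP 1 u); case: (lerP v (-1)); case: (lerP 1 v);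
  move=> *; apply/andP; split; nra.
Qed.

Lemma huber1_slope_bound u : -1/2 <= huber1_slope u <= 1/2.
Proof.
by rewrite /huber1_slope; case: (lerP u (-1)); case: (lerP 1 u);
  move=> *; apply/andP; split; lra.
Qed.

Lemma huber1_le u : huber1 u <= `|u| / 2 + 1/4.
Proof.
rewrite /huber1; have [u_ge0|u_lt0] := lerP 0 u;
  [rewrite ger0_norm // | rewrite ltr0_norm //];
  by case: (lerP u (-1)); case: (lerP 1 u); nra.
Qed.

Lemma huber1_right u : 1 <= u -> huber1 u = u / 2 /\ huber1_slope u = 1 / 2.
Proof.
move=> u_ge1; rewrite /huber1 /huber1_slope u_ge1.
by have -> : (u <= -1) = false by apply/negbTE; rewrite -ltNge; lra.
Qed.

Lemma huber1_left u : u <= -1 -> huber1 u = - u / 2 /\ huber1_slope u = - 1 / 2.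
Proof. by move=> u_leN1; rewrite /huber1 /huber1_slope u_leN1. Qed.

End UnitHuber.

Section SmoothMax.
Variables (R : realType) (h : R).
Hypothesis h_gt0 : 0 < h.
Implicit Types u v a b : R.

Definition huber u := h * huber1 (u / h).
Definition huber_slope u := huber1_slope (u / h).

Let h_neq0 : h != 0. Proof. by rewrite gt_eqF. Qed.

Lemma huber_tangent u v :
  0 <= huber v - huber u - huber_slope u * (v - u) <= (4 * h)^-1 * (v - u) ^+ 2.
Proof.
have -> : huber v - huber u - huber_slope u * (v - u) =
    h * (huber1 (v / h) - huber1 (u / h) - huber1_slope (u / h) * (v / h - u / h)).
  by rewrite /huber /huber_slope; field.
have -> : (4 * h)^-1 * (v - u) ^+ 2 = h * ((v / h - u / h) ^+ 2 / 4) by field.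
have /andP[lo hi] := huber1_tangent (u / h) (v / h).
by rewrite mulr_ge0 ?(ltW h_gt0) ?ler_pM2l.
Qed.

Lemma huber_le u : huber u <= `|u| / 2 + h / 4.
Proof.
have -> : `|u| / 2 + h / 4 = h * (`|u / h| / 2 + 1/4).
  by rewrite normrM normfV (gtr0_norm h_gt0); field.
by rewrite ler_pM2l // huber1_le.
Qed.

Lemma huber_right u : h <= u -> huber u = u / 2 /\ huber_slope u = 1 / 2.
Proof.
move=> u_ge; have u_ge1 : 1 <= u / h by rewrite ler_pdivlMr // mul1r.
rewrite /huber /huber_slope; have [-> ->] := huber1_right u_ge1.
by split=> //; field.
Qed.

Lemma huber_left u : u <= - h -> huber u = - u / 2 /\ huber_slope u = - 1 / 2.
Proof.
move=> u_le; have u_leN1 : u / h <= -1 by rewrite ler_pdivrMr // mulN1r.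
rewrite /huber /huber_slope; have [-> ->] := huber1_left u_leN1.
by split=> //; field.
Qed.

Lemma huber_convex t u v : 0 <= t -> t <= 1 ->
  huber (t * u + (1 - t) * v) <= t * huber u + (1 - t) * huber v.
Proof.
move=> t_ge0 t_le1; set w := t * u + (1 - t) * v.
have /andP[tu _] := huber_tangent w u; have /andP[tv _] := huber_tangent w v.
have : 0 <= t * (huber u - huber w - huber_slope w * (u - w)) +
            (1 - t) * (huber v - huber w - huber_slope w * (v - w)).
  by rewrite addr_ge0 // mulr_ge0 // subr_ge0.
suff -> : t * (huber u - huber w - huber_slope w * (u - w)) +
    (1 - t) * (huber v - huber w - huber_slope w * (v - w)) =
    t * huber u + (1 - t) * huber v - huber w by rewrite subr_ge0.
by rewrite /w; ring.
Qed.

Lemma huber_lipschitz u v : `|huber u - huber v| <= `|u - v| / 2.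
Proof.
have /andP[uv _] := huber_tangent u v; have /andP[vu _] := huber_tangent v u.
have /andP[su_lo su_hi] := huber1_slope_bound (u / h).
have /andP[sv_lo sv_hi] := huber1_slope_bound (v / h).
rewrite /huber_slope in uv vu; rewrite ler_norml.
by have [uv_ge0|uv_lt0] := lerP 0 (u - v);
  [rewrite ger0_norm // | rewrite ltr0_norm //]; apply/andP; split; nra.
Qed.

Global Instance is_diff_huber u : is_diff u huber ( *:%R (huber_slope u)).
Proof.
apply: (is_diff_quadratic_remainder (C := (4 * h)^-1)).
  exact: scaler_continuous.
move=> y; have /andP[lo hi] := huber_tangent u (y + u).
by rewrite addrK in lo hi; rewrite real_normK ?num_real // ger0_norm.
Qed.

(* max a b = (a + b) / 2 + |a - b| / 2; the Huber function replaces |.| / 2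
   only on (-h, h), at a cost of at most h / 4. *)
Definition smax a b := (a + b) / 2 + huber (a - b).

Lemma smax_le a b c : a <= c -> b <= c -> smax a b <= c + h / 4.
Proof.
move=> ac bc; have := huber_le (a - b); rewrite /smax.
by have [ab|ab] := lerP 0 (a - b); [rewrite ger0_norm | rewrite ltr0_norm]; lra.
Qed.

Lemma smax_left a b : h <= a - b -> smax a b = a.
Proof. by move=> ab; rewrite /smax (huber_right ab).1; field. Qed.

Lemma smax_right a b : a - b <= - h -> smax a b = b.
Proof. by move=> ab; rewrite /smax (huber_left ab).1; field. Qed.

Lemma smax_homo_r a : {homo smax a : b b' / b <= b'}.
Proof.
move=> b b' bb'; have := huber_lipschitz (a - b) (a - b').
have -> : a - b - (a - b') = b' - b by ring.
rewrite [`|b' - b|]ger0_norm ?subr_ge0 // ler_norml /smax => /andP[? ?]; lra.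
Qed.

Lemma smax_convex t a a' b b' : 0 <= t -> t <= 1 ->
  smax (t * a + (1 - t) * a') (t * b + (1 - t) * b') <=
  t * smax a b + (1 - t) * smax a' b'.
Proof.
move=> t_ge0 t_le1; have := huber_convex (a - b) (a' - b') t_ge0 t_le1.
rewrite /smax; have -> : t * a + (1 - t) * a' - (t * b + (1 - t) * b') =
    t * (a - b) + (1 - t) * (a' - b') by ring.
lra.
Qed.

Section SmoothMaxDifferential.
Variables (V : normedModType R) (A B dA dB : V -> R) (z : V).
Hypotheses (A_diff : is_diff z A dA) (B_diff : is_diff z B dB).

Global Instance is_diff_smax :
  is_diff z (fun w => smax (A w) (B w))
    ((2^-1 + huber_slope (A z - B z)) *: dA +
     (2^-1 - huber_slope (A z - B z)) *: dB).
Proof.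
have -> : (fun w => smax (A w) (B w)) = 2^-1 *: (A + B) + (huber \o (A - B)).
  by apply/funext => w; rewrite /smax /= mulrC.
have AB_diff := is_diffB A_diff B_diff.
have AB2_diff := is_diffZ (2^-1) (is_diffD A_diff B_diff).
have H_diff := is_diff_comp AB_diff (is_diff_huber ((A - B) z)).
apply: is_diff_eq (is_diffD AB2_diff H_diff) _.
apply/funext => v; rewrite !fctE /=.
by rewrite scalerDr scalerBr !scalerDl scaleNr addrACA.
Qed.

Lemma is_diff_smax_left :
  h <= A z - B z -> is_diff z (fun w => smax (A w) (B w)) dA.
Proof.
move=> AB; apply: is_diff_eq is_diff_smax _; rewrite (huber_right AB).2.
have -> : 2^-1 + 1 / 2 = 1 :> R by field.
have -> : 2^-1 - 1 / 2 = 0 :> R by field.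
by rewrite scale1r scale0r addr0.
Qed.

Lemma is_diff_smax_right :
  A z - B z <= - h -> is_diff z (fun w => smax (A w) (B w)) dB.
Proof.
move=> AB; apply: is_diff_eq is_diff_smax _; rewrite (huber_left AB).2.
have -> : 2^-1 + - 1 / 2 = 0 :> R by field.
have -> : 2^-1 - - 1 / 2 = 1 :> R by field.
by rewrite scale1r scale0r add0r.
Qed.

End SmoothMaxDifferential.

End SmoothMax.

Section SmoothMaxFold.
Variables (R : realType) (n : nat) (h L : R).
Hypothesis h_gt0 : 0 < h.
Implicit Types (a b : R * 'rV[R]_n) (s : seq (R * 'rV[R]_n)) (x y z : 'rV[R]_n).

(* Affine functions are encoded by their coefficients, so that repeated pieces
   can be removed with undup: smoothing max a a costs h / 4. *)
Definition aff a z : R := a.1 + dotv a.2 z.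

Lemma aff_convex_comb a t x y :
  aff a (t *: x + (1 - t) *: y) = t * aff a x + (1 - t) * aff a y.
Proof. by rewrite /aff dotvDr !dotvZr; ring. Qed.

Global Instance is_diff_aff a z : is_diff z (aff a) (dotv a.2).
Proof.
apply: (is_diff_quadratic_remainder (C := 0)); first exact: dotv_continuous.
move=> y; suff -> : aff a (y + z) - aff a z - dotv a.2 y = 0.
  by rewrite normr0 mul0r.
by rewrite /aff dotvDr; ring.
Qed.

Fixpoint smax_fold s : 'rV[R]_n -> R :=
  if s is a :: s' then fun z => smax h (aff a z) (smax_fold s' z) else fun=> L.

Lemma smax_fold_convex s : convex_fun (smax_fold s).
Proof.
elim: s => [|a s IH] x y t t_ge0 t_le1 /=; first by rewrite -mulrDl subrKC mul1r.
rewrite aff_convex_comb; apply: le_trans (smax_convex h_gt0 _ _ _ _ t_ge0 t_le1).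
exact: smax_homo_r (IH x y t t_ge0 t_le1).
Qed.

Lemma smax_fold_differentiable s z : differentiable (smax_fold s) z.
Proof.
elim: s => [|a s IH] /=; first exact: differentiable_cst.
exact: (ex_diff
  (is_diff_def := is_diff_smax h_gt0 (is_diff_aff a z) (differentiableP IH))).
Qed.

Lemma smax_fold_le s z c : L <= c -> (forall a, a \in s -> aff a z <= c) ->
  smax_fold s z <= c + (size s)%:R * (h / 4).
Proof.
elim: s => [|a s IH] L_le s_le /=; first by rewrite mul0r addr0.
have fold_le : smax_fold s z <= c + (size s)%:R * (h / 4).
  by apply: IH => // b b_in; apply: s_le; rewrite inE b_in orbT.
have a_le : aff a z <= c by apply: s_le; rewrite mem_head.
have : 0 <= (size s)%:R * (h / 4) by rewrite mulr_ge0 ?ler0n ?divr_ge0 // ltW.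
move=> size_ge0.
apply: le_trans (smax_le h_gt0 (_ : aff a z <= c + _) fold_le) _; first lra.
rewrite -[(size s).+1]addn1 natrD; lra.
Qed.

Lemma smax_fold_exact s a z M : uniq s -> a \in s ->
  (forall b, b \in s -> b != a -> aff b z <= aff a z - M) ->
  L <= aff a z - M -> (size s)%:R * (h / 4) + h <= M ->
  smax_fold s z = aff a z /\ is_diff z (smax_fold s) (dotv a.2).
Proof.
move=> s_uniq /splitPr a_split.
case: a_split s_uniq => s1 s2 s_uniq dominated L_le size_le.
have {}dominated b : b \in s1 ++ s2 -> aff b z <= aff a z - M.
  move: s_uniq; rewrite uniq_catC cat_cons cons_uniq => /andP[a_notin _] b_in.
  apply: dominated.
    by move: b_in; rewrite !mem_cat inE => /orP[] ->; rewrite ?orbT.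
  by apply: contraNneq a_notin => <-; rewrite mem_cat orbC -mem_cat.
have size2_le : (size s2)%:R * (h / 4) + h <= M.
  apply: le_trans _ size_le; rewrite lerD2r ler_pM2r ?divr_gt0 // ler_nat.
  by rewrite size_cat /= addnS ltnW // ltnS leq_addl.
have h_le : h <= M.
  have : 0 <= (size s2)%:R * (h / 4) by rewrite mulr_ge0 ?ler0n ?divr_ge0 // ltW.
  lra.
elim: s1 dominated {s_uniq size_le} => [|b s1 IH] dominated /=.
  have fold_le : smax_fold s2 z <= aff a z - M + (size s2)%:R * (h / 4).
    exact: smax_fold_le.
  have gap : h <= aff a z - smax_fold s2 z by lra.
  split; first exact: smax_left.
  exact (is_diff_smax_left h_gt0 (is_diff_aff a z)
    (differentiableP (smax_fold_differentiable s2 z)) gap).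
have [fold_eq fold_diff] : smax_fold (s1 ++ a :: s2) z = aff a z /\
    is_diff z (smax_fold (s1 ++ a :: s2)) (dotv a.2).
  by apply: IH => c c_in; apply: dominated; rewrite /= inE c_in orbT.
have := dominated b (mem_head _ _); rewrite -fold_eq => b_le.
have gap : aff b z - smax_fold (s1 ++ a :: s2) z <= - h by lra.
split; first by rewrite smax_right.
exact (is_diff_smax_right h_gt0 (is_diff_aff b z) fold_diff gap).
Qed.

End SmoothMaxFold.

Section SmoothMaxInterpolant.
Variables (R : realType) (n : nat) (I : finType).
Variables (p : I -> 'rV[R]_n) (c : I -> R) (G : I -> 'rV[R]_n) (M : R).
Hypothesis M_gt0 : 0 < M.
Hypothesis data_consistent : forall i j, p i = p j -> c i = c j /\ G i = G j.
Hypothesis data_separated :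
  forall i j, p i != p j -> c j + dotv (G j) (p i - p j) <= c i - M.

Definition tangent_piece i : R * 'rV[R]_n := (c i - dotv (G i) (p i), G i).

Lemma aff_tangent_piece i z : aff (tangent_piece i) z = c i + dotv (G i) (z - p i).
Proof. by rewrite /aff dotvBr /=; ring. Qed.

Lemma tangent_piece_dominated i j : tangent_piece j != tangent_piece i ->
  aff (tangent_piece j) (p i) <= c i - M.
Proof.
move=> ji; rewrite aff_tangent_piece; apply: data_separated.
apply: contraNneq ji => pij; have [cij Gij] := data_consistent pij.
by rewrite /tangent_piece cij Gij pij.
Qed.

Lemma smooth_max_interpolant : exists F : 'rV[R]_n -> R,
  convex_fun F /\ (forall z, differentiable F z) /\
  forall i, F (p i) = c i /\ is_diff (p i) F (dotv (G i)).
Proof.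
pose s := undup [seq tangent_piece i | i <- enum I].
(* leaves room for the h / 4 lost at each of the size s smoothing steps *)
pose h := M / ((size s)%:R + 1).
pose L := \big[Num.min/0]_i c i - M.
have size_ge0 : 0 <= (size s)%:R :> R by [].
have h_gt0 : 0 < h by rewrite divr_gt0 // ltr_wpDl.
have size_h : (size s)%:R * (h / 4) + h <= M.
  have : h * ((size s)%:R + 1) = M by rewrite divfK // gt_eqF // ltr_wpDl.
  nra.
exists (smax_fold h L s); split; first exact: smax_fold_convex.
split; first exact: smax_fold_differentiable.
move=> i; have aff_at : aff (tangent_piece i) (p i) = c i.
  by rewrite aff_tangent_piece subrr linear0 addr0.
rewrite -aff_at; apply: (smax_fold_exact h_gt0 (undup_uniq _) _ _ _ size_h).
- by rewrite mem_undup map_f ?mem_enum.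
- move=> b; rewrite mem_undup => /mapP[j _ ->]; rewrite aff_at.
  exact: tangent_piece_dominated.
- by rewrite aff_at lerD2r bigmin_le.
Qed.

End SmoothMaxInterpolant.

Section Interpolation.
Variables (R : realType) (n : nat) (I : finType).
Variables (x : I -> 'rV[R]_n) (fv : I -> R) (g : I -> 'rV[R]_n).

Definition tangent_gap i j := fv i - fv j - dotv (g j) (x i - x j).

Definition interpolation_conditions := forall i j,
  0 <= tangent_gap i j /\ (x i != x j -> 0 < tangent_gap i j) /\
  (g i != g j -> 0 < tangent_gap i j).

Definition strictly_convex_interpolable := exists f : 'rV[R]_n -> R,
  convex_fun f /\ (forall z, differentiable f z) /\ strictly_convex_fun f /\
  (forall i, fv i = f (x i) /\ is_gradient f (x i) (g i)).

Lemma interpolation_necessary :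
  strictly_convex_interpolable -> interpolation_conditions.
Proof.
case=> f [f_convex [f_diff [f_strict f_interp]]] i j.
have [fi grad_i] := f_interp i; have [fj grad_j] := f_interp j.
have tangent_j y : f (x j) + 'd f (x j) (y - x j) = fv j + dotv (g j) (y - x j).
  by rewrite grad_j.2 fj.
have gap_gt0 : x i != x j -> 0 < tangent_gap i j.
  move=> xij.
  have := strictly_convex_gradient_ineq f_convex f_strict (f_diff (x j)) xij.
  by rewrite tangent_j -fi /tangent_gap; lra.
split; last split=> // gij.
  have := convex_gradient_ineq (x i) f_convex (f_diff (x j)).
  by rewrite tangent_j -fi /tangent_gap; lra.
have [xij|] := eqVneq (x i) (x j); last exact: gap_gt0.
by rewrite xij in grad_i; rewrite (is_gradient_unique grad_i grad_j) eqxx in gij.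
Qed.

Lemma interpolable_add_dotvv (F : 'rV[R]_n -> R) (e : R) : 0 < e ->
  convex_fun F -> (forall z, differentiable F z) ->
  (forall i, F (x i) = fv i - e / 2 * dotv (x i) (x i) /\
             is_diff (x i) F (dotv (g i - e *: x i))) ->
  strictly_convex_interpolable.
Proof.
move=> e_gt0 F_convex F_diff F_interp; have e2_gt0 : 0 < e / 2 by rewrite divr_gt0.
exists (F + (e / 2) *: (fun w => dotv w w)); split.
  exact: convex_add_dotvv (ltW e2_gt0) F_convex.
split.
  move=> z; apply: differentiableD (F_diff z) (differentiableZ _ _).
  exact: (ex_diff (is_diff_def := is_diff_dotvv z)).
split; first exact: strictly_convex_add_dotvv e2_gt0 F_convex.
move=> i; have [Fi dFi] := F_interp i; split; first by rewrite !fctE /= Fi subrK.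
apply: is_diff_gradient.
apply: is_diff_eq (is_diffD dFi (is_diffZ _ (is_diff_dotvv _))) _.
apply/funext => v; rewrite !fctE /= dotvBl !dotvZl.
by rewrite -[X in _ + X]/(e / 2 * (2 * dotv (x i) v)); field.
Qed.

Hypothesis conditions : interpolation_conditions.

Lemma interpolation_data_consistent i j : x i = x j -> fv i = fv j /\ g i = g j.
Proof.
move=> xij; have [gap_ij [_ gap_g]] := conditions i j.
have [gap_ji _] := conditions j i.
rewrite /tangent_gap xij subrr linear0 subr0 in gap_ij gap_ji gap_g.
have fij : fv i = fv j by lra.
by split=> //; apply/eqP; apply: contraT => /gap_g; rewrite fij subrr ltxx.
Qed.

Lemma tangent_gap_margin : exists2 e, 0 < e & exists2 M, 0 < M &
  forall i j, x i != x j ->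
    e / 2 * dotv (x i - x j) (x i - x j) + M <= tangent_gap i j.
Proof.
pose D := \big[Num.min/1]_(ij | x ij.1 != x ij.2) tangent_gap ij.1 ij.2.
pose K := \big[Num.max/0]_ij dotv (x ij.1 - x ij.2) (x ij.1 - x ij.2).
have D_gt0 : 0 < D by apply: lt_bigmin => // -[i j] /= /(conditions i j).2.1.
have K_ge0 : 0 <= K := bigmax_ge_id _ _ _ _.
exists (D / (K + 1)); first by rewrite divr_gt0 // ltr_wpDl.
exists (D / 2); first by rewrite divr_gt0.
move=> i j xij.
have D_le : D <= tangent_gap i j by exact: (bigmin_le_cond _ (j := (i, j))).
have dist_le : dotv (x i - x j) (x i - x j) <= K by exact: (le_bigmax _ _ (i, j)).
have : D / (K + 1) * dotv (x i - x j) (x i - x j) <= D.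
  by rewrite mulrAC ler_pdivrMr ?ler_pM2l // ?ltr_wpDl //; lra.
lra.
Qed.

Lemma interpolation_sufficient : strictly_convex_interpolable.
Proof.
have [e e_gt0 [M M_gt0 margin]] := tangent_gap_margin.
pose c i := fv i - e / 2 * dotv (x i) (x i).
pose G i := g i - e *: x i.
have shifted_gap i j : c i - (c j + dotv (G j) (x i - x j)) =
    tangent_gap i j - e / 2 * dotv (x i - x j) (x i - x j).
  rewrite /c /G /tangent_gap !(dotvBl, dotvBr, dotvZl) (dotvC (x j) (x i)).
  by field.
have consistent i j : x i = x j -> c i = c j /\ G i = G j.
  move=> xij; have [fij gij] := interpolation_data_consistent xij.
  by rewrite /c /G fij gij xij.
have separated i j : x i != x j -> c j + dotv (G j) (x i - x j) <= c i - M.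
  by move=> xij; have := margin i j xij; have := shifted_gap i j; lra.
have [F [F_convex [F_diff F_interp]]] :=
  smooth_max_interpolant M_gt0 consistent separated.
exact: interpolable_add_dotvv e_gt0 F_convex F_diff F_interp.
Qed.

End Interpolation.

Theorem proposition4p2 (R : realType) (n : nat) (I : finType)
  (x : I -> 'rV[R]_n) (fv : I -> R) (g : I -> 'rV[R]_n) :
  (exists f : 'rV[R]_n -> R,
      convex_fun f /\ (forall z, differentiable f z) /\ strictly_convex_fun f /\
      (forall i, fv i = f (x i) /\ is_gradient f (x i) (g i)))
  <->
  (forall i j : I,
      0 <= fv i - fv j - dotv (g j) (x i - x j) /\
      (x i != x j -> 0 < fv i - fv j - dotv (g j) (x i - x j)) /\
      (g i != g j -> 0 < fv i - fv j - dotv (g j) (x i - x j))).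
Proof.
split; [exact: interpolation_necessary | exact: interpolation_sufficient].
Qed.
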